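(* Let $0<s_1<s_2$ and $m\ge1$. The defect capacitance matrix $\mathcal C\in\mathbb R^{(4m+1)\times(4m+1)}$ has at most one eigenvalue in the interval $\Gamma=\big(\frac{2}{s_2},\frac{2}{s_1}\big)$. Moreover, for all $m$ sufficiently large it has exactly one eigenvalue in $\Gamma$.
   Context: Set $\alpha=\frac1{s_1}+\frac1{s_2}$, $\beta_1=-\frac1{s_1}$, $\beta_2=-\frac1{s_2}$, $\eta=\frac2{s_2}$. The defect capacitance matrix $\mathcal C$ ($N=4m+1$) is the real symmetric tridiagonal matrix with diagonal entries $\mathcal C_{11}=\mathcal C_{NN}=\frac1{s_1}$, $\mathcal C_{2m+1,2m+1}=\eta$, $\mathcal C_{ii}=\alpha$ otherwise, and off-diagonal entries $\mathcal C_{i,i+1}=\mathcal C_{i+1,i}$ equal to $\beta_1$ ($i$ odd) and $\beta_2$ ($i$ even) for $1\le i\le 2m$, and $\beta_2$ ($i$ odd) and $\beta_1$ ($i$ even) for $2m+1\le i\le 4m$. It is the capacitance matrix of a chain of $4m+1$ identical resonators with spacings $s_i$ equal to $s_1$ ($i$ odd), $s_2$ ($i$ even) for $i\le 2m$ and $s_2$ ($i$ odd), $s_1$ ($i$ even) for $2m+1\le i\le 4m$. $\Gamma$ is the gap between the two spectral bands of the corresponding infinite periodic dimer chain. *)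

From HB Require Import structures.
From mathcomp Require Import all_boot all_order all_algebra.
From mathcomp Require Import reals.
Set Implicit Arguments.
Unset Strict Implicit.
Unset Printing Implicit Defensive.
Import Order.TTheory GRing.Theory Num.Theory.
Local Open Scope ring_scope.

(* Entry (i,j) of the defect capacitance matrix, with 1-based indices i j,
   N = 4m+1. *)
Definition defect_entry {R : realType} (s1 s2 : R) (m i j : nat) : R :=
  let N := (4 * m + 1)%N in
  if i == j then
    (if (i == 1%N) || (i == N) then s1^-1
     else if i == (2 * m + 1)%N then 2 / s2
     else s1^-1 + s2^-1)
  else if (j == i.+1) || (i == j.+1) then
    let k := minn i j in
    (if (k <= 2 * m)%N then (if odd k then - s1^-1 else - s2^-1)
     else (if odd k then - s2^-1 else - s1^-1))
  else 0.

Definition defect_cap {R : realType} (s1 s2 : R) (m : nat) : 'M[R]_(4 * m + 1) :=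
  \matrix_(i, j) defect_entry s1 s2 m i.+1 j.+1.

From HB Require Import structures.
From mathcomp Require Import all_boot all_order all_algebra.
From mathcomp Require Import reals polyrcf.
From mathcomp Require Import ring lra zify.
Import Order.TTheory GRing.Theory Num.Theory.
Set Implicit Arguments.
Unset Strict Implicit.
Unset Printing Implicit Defensive.
Local Open Scope ring_scope.

(* Write l = al / s1 and t = s2 / s1.  Away from its last column, the eigen-equation
   v C = l v is a two-term recurrence, so on the left half of the chain an eigenvector is
   v_0 times an explicit sequence X(al).  As C is persymmetric, reversing an eigenvector
   gives another one.  In the gap the transfer map keeps |X_(2i+1)| < (-1)^i X_(2i); hence
   X_(2m) <> 0, which forces every gap eigenvector to be symmetric and thus a multiple of
   the symmetric extension w(al) of X(al).  Two such vectors have positive inner product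
   (their pairs (X_(2i), X_(2i+1)) lie in the same cone), contradicting the orthogonality
   of eigenvectors of the symmetric matrix C for distinct eigenvalues: there is at most
   one gap eigenvalue.  Conversely w(al) is an eigenvector as soon as the middle row
   holds, a polynomial equation H(al) = 0; the values of H at the gap edges 2/t and 2 have
   opposite signs once m is large, and the intermediate value theorem provides a root. *)

Lemma eigenvectors_orthogonal (F : fieldType) n (A : 'M[F]_n) (u v : 'rV[F]_n) a b :
  A^T = A -> u *m A = a *: u -> v *m A = b *: v -> a != b -> u *m v^T = 0.
Proof.
move=> symA eig_u eig_v neq_ab.
have eq_a : u *m A *m v^T = a *: (u *m v^T) by rewrite eig_u scalemxAl.
have eq_b : u *m A *m v^T = b *: (u *m v^T).
  by rewrite -mulmxA -{1}symA -trmx_mul eig_v linearZ /= scalemxAr.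
have : (a - b) *: (u *m v^T) = 0 by rewrite scalerBl -eq_a -eq_b subrr.
by move/eqP; rewrite scaler_eq0 subr_eq0 (negbTE neq_ab) => /eqP.
Qed.

Lemma big_nat_pairs (V : nmodType) n (F : nat -> V) :
  \sum_(0 <= k < 2 * n) F k = \sum_(0 <= i < n) (F (2 * i)%N + F (2 * i).+1).
Proof.
elim: n => [|n IH]; first by rewrite !big_geq.
by rewrite mulnS !big_nat_recr //= IH addrA.
Qed.

Lemma big_nat_mirror (V : nmodType) n (F : nat -> V) :
  \sum_(0 <= k < (2 * n).+1) F (minn k (2 * n - k)) = (\sum_(0 <= k < n) F k) *+ 2 + F n.
Proof.
rewrite (big_cat_nat (n := n.+1)) /=; [|lia|lia].
rewrite big_nat_recr //= mulr2n addrAC.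
congr (_ + _ + _); last by congr F; lia.
  by apply: eq_big_nat => k /andP[_ ?]; congr F; lia.
rewrite -{1}[n.+1]add0n big_addn [RHS]big_nat_rev /=.
rewrite (_ : ((2 * n).+1 - n.+1 = n)%N); last lia.
apply: eq_big_nat => k /andP[_ k_lt].
rewrite (_ : (2 * n - (k + n.+1) = n - k.+1)%N); last lia.
by rewrite (minn_idPr _) //; lia.
Qed.

Lemma big_nat_band (V : nmodType) n j (F : nat -> V) : (j.+2 <= n)%N ->
  (forall k, (k.+1 < j)%N || (j.+1 < k)%N -> F k = 0) ->
  \sum_(0 <= k < n) F k = \sum_(j.-1 <= k < j.+2) F k.
Proof.
move=> j_lt F0.
have out_lo : \sum_(0 <= k < j.-1) F k = 0.
  by rewrite big_nat big1 // => k /andP[_ ?]; apply: F0; apply/orP; left; lia.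
have out_hi : \sum_(j.+2 <= k < n) F k = 0.
  by rewrite big_nat big1 // => k /andP[? _]; apply: F0; apply/orP; right; lia.
rewrite (big_cat_nat (n := j.+2)) // (big_cat_nat (n := j.-1)) //; last lia.
by rewrite out_lo out_hi Monoid.mul1m Monoid.mulm1.
Qed.

Section RowNth.
Variables (R : pzRingType) (n : nat).
Implicit Types (u v : 'rV[R]_n).

Definition rv_nth v k : R := if insub k is Some i then v 0 i else 0.

Definition rv_rev v : 'rV[R]_n := \row_k v 0 (rev_ord k).

Lemma rv_nth_ord v (i : 'I_n) : rv_nth v i = v 0 i.
Proof. by rewrite /rv_nth valK. Qed.

Lemma rv_nthZ a v k : rv_nth (a *: v) k = a * rv_nth v k.
Proof. by rewrite /rv_nth; case: insub => [i|]; rewrite ?mxE ?mulr0. Qed.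

Lemma rv_nthP u v : (forall k, (k < n)%N -> rv_nth u k = rv_nth v k) -> u = v.
Proof. by move=> uv; apply/rowP => i; rewrite -!rv_nth_ord uv. Qed.

Lemma rv_revZ a v : rv_rev (a *: v) = a *: rv_rev v.
Proof. by apply/rowP => k; rewrite !mxE. Qed.

Lemma rv_nth_rev v k : (k < n)%N -> rv_nth (rv_rev v) k = rv_nth v (n.-1 - k).
Proof.
move=> k_lt; rewrite -[k]/(nat_of_ord (Ordinal k_lt)) rv_nth_ord mxE -rv_nth_ord.
by congr rv_nth; rewrite /=; lia.
Qed.

Lemma rv_nth_rev_sub v k : (k < n)%N -> rv_nth v k = rv_nth (rv_rev v) (n.-1 - k).
Proof. by move=> k_lt; rewrite rv_nth_rev; [congr rv_nth|]; lia. Qed.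

End RowNth.

Section DefectEntry.
Variables (R : realType) (s1 s2 : R) (m : nat).
Local Notation entry := (defect_entry s1 s2 m).

(* The spacing s_k between resonators k and k + 1 (1-based). *)
Definition spacing k : R :=
  if (k <= 2 * m)%N then (if odd k then s1 else s2) else (if odd k then s2 else s1).

Lemma spacing_gt0 k : 0 < s1 -> 0 < s2 -> 0 < spacing k.
Proof. by move=> ? ?; rewrite /spacing; do 2![case: ifP => _]. Qed.

Lemma spacing_rev k : (k < 4 * m)%N -> spacing (4 * m - k) = spacing k.+1.
Proof.
move=> k_lt; rewrite /spacing oddS oddB ?oddM /=; last lia.
rewrite (_ : (4 * m - k <= 2 * m)%N = ~~ (k < 2 * m)%N); last by apply/idP/idP; lia.
by case: (k < 2 * m)%N; case: odd.
Qed.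

Lemma defect_entry_sym i j : entry i j = entry j i.
Proof.
rewrite /defect_entry eq_sym; case: eqP => [->//|_].
by rewrite orbC minnC.
Qed.

Lemma defect_entry_far i j : i != j -> j != i.+1 -> i != j.+1 -> entry i j = 0.
Proof. by move=> ij ji ij'; rewrite /defect_entry (negbTE ij) (negbTE ji) (negbTE ij'). Qed.

Lemma defect_entry_super k : entry k k.+1 = - (spacing k)^-1.
Proof.
rewrite /defect_entry /spacing (_ : k == k.+1 = false) ?eqxx; last by apply/eqP; lia.
by rewrite (_ : minn k k.+1 = k); [do 2![case: ifP => _] | lia].
Qed.

Lemma defect_entry_first : (0 < m)%N -> entry 1 1 = (spacing 1)^-1.
Proof. by move=> m_gt0; rewrite /defect_entry /spacing eqxx (_ : (1 <= 2 * m)%N) //; lia. Qed.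

Lemma defect_entry_diag j : (0 < j < 4 * m)%N ->
  entry j.+1 j.+1 = (spacing j)^-1 + (spacing j.+1)^-1.
Proof.
move=> j_range; rewrite /defect_entry /spacing eqxx oddS.
rewrite (_ : (j.+1 == 1%N) || (j.+1 == (4 * m + 1)%N) = false); last first.
  by apply/negbTE; rewrite negb_or; apply/andP; split; apply/eqP; lia.
case: (ltngtP j (2 * m)) => [j_lt|j_gt|->].
- by rewrite ifN; [case: odd; rewrite // addrC | apply/eqP; lia].
- by rewrite ifN; [case: odd; rewrite // addrC | apply/eqP; lia].
- by rewrite addn1 eqxx oddM /=; ring.
Qed.

Lemma defect_entry_rev i j : (i <= 4 * m)%N -> (j <= 4 * m)%N ->
  entry (4 * m - i).+1 (4 * m - j).+1 = entry i.+1 j.+1.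
Proof.
move=> i_le j_le; wlog ij : i j i_le j_le / (i <= j)%N.
  move=> sym_case; case: (leqP i j) => [|/ltnW ji]; first exact: sym_case.
  by rewrite defect_entry_sym [RHS]defect_entry_sym; apply: sym_case.
case: (eqVneq i j) => [<-|neq_ij].
  rewrite /defect_entry !eqxx orbC.
  have flip k : (k <= 4 * m)%N -> ((4 * m - i).+1 == k.+1) = (i == 4 * m - k)%N.
    by move=> k_le; apply/eqP/eqP; lia.
  rewrite !addn1 (flip 0%N) // (flip (4 * m)%N) // (flip (2 * m)%N); last lia.
  by rewrite subn0 subnn (_ : (4 * m - 2 * m = 2 * m)%N); last lia.
case: (eqVneq j i.+1) => [->|ji]; last by rewrite !defect_entry_far //; apply/eqP; lia.
rewrite (_ : (4 * m - i).+1 = (4 * m - i.+1).+2); last lia.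
rewrite defect_entry_sym !defect_entry_super (_ : (4 * m - i.+1).+1 = 4 * m - i)%N; last lia.
by rewrite spacing_rev //; lia.
Qed.

End DefectEntry.

Section Transfer.
Variables (U : comUnitRingType) (al t : U).

(* With al = l * s1 and t = s2 / s1, row k of v C = l v on the left half of the chain
   reads v_(k+1) = transfer_step k v_(k-1) v_k, and transfer i = (X_(2i), X_(2i+1)) is
   the solution with X_0 = 1. *)
Definition transfer_step (k : nat) (a b : U) : U :=
  if odd k then (1 + t - t * al) * b - t * a else (1 - al) * b + (b - a) / t.

Fixpoint transfer (i : nat) : U * U :=
  if i is i'.+1 then
    let o := transfer_step (2 * i').+1 (transfer i').1 (transfer i').2 in
    (o, transfer_step (2 * i').+2 (transfer i').2 o)
  else (1, 1 - al).

Definition transfer_seq (k : nat) : U := if odd k then (transfer k./2).2 else (transfer k./2).1.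

(* H(al): the residual of the middle row for the symmetric extension of X. *)
Definition center_residual (m : nat) : U :=
  2 * (transfer_seq (2 * m) - transfer_seq (2 * m).-1) - t * al * transfer_seq (2 * m).

Lemma transfer_seq_double i : transfer_seq (2 * i) = (transfer i).1.
Proof. by rewrite /transfer_seq mul2n odd_double doubleK. Qed.

Lemma transfer_seq_double_succ i : transfer_seq (2 * i).+1 = (transfer i).2.
Proof. by rewrite /transfer_seq mul2n /= odd_double /= uphalf_double. Qed.

Lemma transfer_seq_double_pred i : (0 < i)%N -> transfer_seq (2 * i).-1 = (transfer i.-1).2.
Proof. by case: i => // i _; rewrite mulnS /= transfer_seq_double_succ. Qed.

Lemma transfer_seq0 : transfer_seq 0 = 1.
Proof. by []. Qed.

(* At k = 0 the truncated 0.-1 makes the (b - a) / t term vanish. *)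
Lemma transfer_seqS k :
  transfer_seq k.+1 = transfer_step k (transfer_seq k.-1) (transfer_seq k).
Proof.
have double_succ2 i : (2 * i).+2 = (2 * i.+1)%N by rewrite mulnS.
rewrite -[k]odd_double_half -mul2n; case: odd; rewrite ?add1n ?add0n.
  by rewrite double_succ2 transfer_seq_double transfer_seq_double_succ /= transfer_seq_double.
case: (k./2) => [|i]; first by rewrite /transfer_step /= subrr mul0r mulr1 addr0.
rewrite transfer_seq_double_succ -double_succ2 /=.
by rewrite transfer_seq_double_succ double_succ2 transfer_seq_double.
Qed.

Lemma transfer_stepZ k c a b : transfer_step k (c * a) (c * b) = c * transfer_step k a b.
Proof. by rewrite /transfer_step; case: odd; ring. Qed.

End Transfer.

Lemma horner_transfer (F : fieldType) (t x : F) i :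
  ((transfer 'X t%:P i).1).[x] = (transfer x t i).1 /\
  ((transfer 'X t%:P i).2).[x] = (transfer x t i).2.
Proof.
elim: i => [|i [IH1 IH2]] /=; first by rewrite !hornerE.
by rewrite /transfer_step /= !oddM /= polyCV !hornerE IH1 IH2.
Qed.

Lemma horner_center_residual (F : fieldType) (t x : F) m :
  (center_residual 'X t%:P m).[x] = center_residual x t m.
Proof.
have horner_transfer_seq k : (transfer_seq 'X t%:P k).[x] = transfer_seq x t k.
  by have [? ?] := horner_transfer t x k./2; rewrite /transfer_seq; case: odd.
by rewrite /center_residual !hornerE !horner_transfer_seq.
Qed.

Lemma cone_lin_gt0 (R : realFieldType) (P Q O E : R) :
  `|E| < O -> 0 < P + Q -> 0 < P - Q -> 0 < P * O + Q * E.
Proof.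
rewrite ltr_norml => /andP[lo hi] pq_gt0 pq'_gt0.
have -> : P * O + Q * E = ((P + Q) * (O + E) + (P - Q) * (O - E)) / 2 by field.
by rewrite divr_gt0 // addr_gt0 // mulr_gt0 //; lra.
Qed.

Section TransferCone.
Variables (R : realFieldType) (al t : R).

Lemma transfer_cone_step (O E O' E' : R) : 1 < t -> 2 < t * al -> al < 2 -> `|E| < O ->
  O' = t * O - (1 + t - t * al) * E -> E' = (1 - al) * O' + (O' + E) / t -> `|E'| < O'.
Proof.
move=> t_gt1 tal_gt2 al_lt2 EO def_O' ->; have t_gt0 : 0 < t by lra.
have tal_lt : t * al < 2 * t by rewrite mulrC ltr_pM2r.
rewrite ltr_norml; apply/andP; split; rewrite -subr_gt0 -(pmulr_rgt0 _ t_gt0).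
  have -> : t * ((1 - al) * O' + (O' + E) / t - - O') =
    ((2 * t - t * al + 1) * t) * O + (1 - (2 * t - t * al + 1) * (1 + t - t * al)) * E.
    by rewrite def_O'; field; lra.
  apply: cone_lin_gt0 => //; move: tal_gt2 tal_lt; set b := t * al => b_gt b_lt.
    have -> : (2 * t - b + 1) * t + (1 - (2 * t - b + 1) * (1 + t - b)) =
      (2 * t - b + 1) * (b - 1) + 1 by ring.
    by rewrite addr_gt0 // mulr_gt0 //; lra.
  have -> : (2 * t - b + 1) * t - (1 - (2 * t - b + 1) * (1 + t - b)) =
    (2 * t - b) * (2 * t - b + 2) by ring.
  by rewrite mulr_gt0 //; lra.
have -> : t * (O' - ((1 - al) * O' + (O' + E) / t)) =
  ((t * al - 1) * t) * O + (- ((t * al - 1) * (1 + t - t * al) + 1)) * E.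
  by rewrite def_O'; field; lra.
apply: cone_lin_gt0 => //; move: tal_gt2 tal_lt; set b := t * al => b_gt b_lt.
  have -> : (b - 1) * t + - ((b - 1) * (1 + t - b) + 1) = b * (b - 2) by ring.
  by rewrite mulr_gt0 //; lra.
have -> : (b - 1) * t - - ((b - 1) * (1 + t - b) + 1) = (b - 1) * (1 + 2 * t - b) + 1 by ring.
by rewrite addr_gt0 // mulr_gt0 //; lra.
Qed.

Lemma transfer_cone i : 1 < t -> 2 < t * al -> al < 2 ->
  `|(transfer al t i).2| < (-1) ^+ i * (transfer al t i).1.
Proof.
move=> t_gt1 tal_gt2 al_lt2; elim: i => [|i IH] /=.
  by rewrite expr0 mul1r ltr_norml; apply/andP; split; nra.
rewrite /transfer_step /= !oddM /= exprS mulN1r.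
move: IH; set s := (-1) ^+ i; set o := (transfer al t i).1; set e := (transfer al t i).2 => IH.
have s_norm : `|s| = 1 by rewrite normrX normrN1 expr1n.
rewrite (_ : forall x, `|x| = `|- s * x|); last by move=> x; rewrite normrM normrN s_norm mul1r.
apply: (transfer_cone_step (O := s * o) (E := s * e)) => //.
  by rewrite normrM s_norm mul1r.
all: ring.
Qed.

End TransferCone.

Lemma transfer_dot_gt0 (R : realFieldType) (a b t : R) i :
  1 < t -> 2 < t * a -> a < 2 -> 2 < t * b -> b < 2 ->
  0 < (transfer a t i).1 * (transfer b t i).1 /\
  0 < (transfer a t i).1 * (transfer b t i).1 + (transfer a t i).2 * (transfer b t i).2.
Proof.
move=> t_gt1 ta_gt2 a_lt2 tb_gt2 b_lt2.
have := transfer_cone i t_gt1 ta_gt2 a_lt2; have := transfer_cone i t_gt1 tb_gt2 b_lt2.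
set s := (-1) ^+ i; set oa := (transfer a t i).1; set ea := (transfer a t i).2.
set ob := (transfer b t i).1; set eb := (transfer b t i).2 => eb_lt ea_lt.
have -> : oa * ob = (s * ob) * (s * oa).
  by rewrite mulrACA -expr2 sqrr_sign mul1r mulrC.
have ob_gt0 : 0 < s * ob by apply: le_lt_trans eb_lt.
split; first by rewrite mulr_gt0 //; apply: le_lt_trans ea_lt.
by rewrite [ea * eb]mulrC; apply: cone_lin_gt0 => //; move: eb_lt; rewrite ltr_norml; lra.
Qed.

Lemma transfer_at_two (F : fieldType) (t : F) i : transfer 2 t i = ((-1) ^+ i, - (-1) ^+ i).
Proof.
elim: i => [|i IH] /=; first by congr pair; rewrite expr0 //; ring.
by rewrite /transfer_step /= !oddM /= IH /= !exprS; congr pair; ring.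
Qed.

Lemma transfer_at_edge (F : fieldType) (t : F) i : t != 0 ->
  transfer (2 / t) t i = ((-1) ^+ i * (1 + i%:R * (2 * (t - 1) / t)),
                          (-1) ^+ i * ((t - 2) / t + i%:R * (2 * (t - 1) / t))).
Proof.
move=> t_neq0; elim: i => [|i IH] /=; first by congr pair; rewrite expr0 mul0r; field.
by rewrite /transfer_step /= !oddM /= IH /= !exprS -natr1; congr pair; field.
Qed.

Lemma center_residual_at_two (F : fieldType) (t : F) m : (0 < m)%N ->
  center_residual 2 t m = - 2 * t * (-1) ^+ m.
Proof.
case: m => // m _; rewrite /center_residual transfer_seq_double transfer_seq_double_pred //.
by rewrite !transfer_at_two /= exprS; ring.
Qed.

Lemma center_residual_at_edge (F : fieldType) (t : F) m : t != 0 -> (0 < m)%N ->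
  center_residual (2 / t) t m = 2 * (-1) ^+ m * ((t - 2) / t + m.-1%:R * (2 * (t - 1) / t)).
Proof.
move=> t_neq0; case: m => // m _.
rewrite /center_residual transfer_seq_double transfer_seq_double_pred //.
by rewrite !transfer_at_edge //= exprS -natr1; field.
Qed.

Lemma center_residual_root (R : realType) (t : R) : 1 < t ->
  exists M, forall m, (M <= m)%N -> exists2 al, 2 / t < al < 2 & center_residual al t m = 0.
Proof.
move=> t_gt1; have t_gt0 : 0 < t by lra.
have t_neq0 : t != 0 by rewrite gt_eqF.
have /archi_boundP K_gt : 0 <= (t - 1)^-1 by rewrite invr_ge0; lra.
exists (Num.Def.archi_bound (t - 1)^-1).+1 => m le_Km.
(* H(2/t) H(2) = -4 t q, and q > 0 once (m - 1)(t - 1) > 1. *)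
set q := (t - 2) / t + m.-1%:R * (2 * (t - 1) / t).
have q_gt0 : 0 < q.
  have : (t - 1)^-1 < m.-1%:R by apply: (lt_le_trans K_gt); rewrite ler_nat; lia.
  rewrite -div1r ltr_pdivrMr; last lra.
  move=> big_m; rewrite (_ : q = (t - 2 + 2 * (m.-1%:R * (t - 1))) / t); last by rewrite /q; field.
  by rewrite divr_gt0 //; lra.
have sign_change : (center_residual 'X t%:P m).[2 / t] * (center_residual 'X t%:P m).[2] < 0.
  rewrite !horner_center_residual center_residual_at_edge ?center_residual_at_two //; try lia.
  rewrite -/q (_ : _ * _ = - (4 * t * q) * (-1) ^+ m ^+ 2); last by ring.
  by rewrite sqrr_sign mulr1 oppr_lt0 !mulr_gt0.
have le_edges : 2 / t <= 2 by rewrite ler_pdivrMr //; lra.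
have [al] := poly_ivtoo le_edges sign_change.
by rewrite in_itv /= => al_in /rootP; rewrite horner_center_residual; exists al.
Qed.

Section DefectCap.
Variables (R : realType) (s1 s2 : R) (m : nat).
Local Notation N := (4 * m + 1)%N.
Local Notation C := (defect_cap s1 s2 m).
Local Notation sp := (spacing s1 s2 m).

Lemma defect_cap_tr : C^T = C.
Proof. by apply/matrixP => i j; rewrite !mxE defect_entry_sym. Qed.

Lemma defect_cap_rev (i j : 'I_N) : C (rev_ord i) (rev_ord j) = C i j.
Proof.
have i_lt := ltn_ord i; have j_lt := ltn_ord j.
by rewrite !mxE -defect_entry_rev /=; [congr (defect_entry _ _ _ _.+1 _.+1)| |]; lia.
Qed.

Lemma mulmx_rev_defect_cap (v : 'rV[R]_N) : rv_rev v *m C = rv_rev (v *m C).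
Proof.
apply/rowP => j; rewrite mxE [RHS]mxE mxE (reindex_inj rev_ord_inj); apply: eq_bigr => k _.
by rewrite [rv_rev _ _ _]mxE rev_ordK -defect_cap_rev rev_ordK.
Qed.

(* For j = 0 the truncated j.-1 makes the first term vanish. *)
Lemma rv_nth_mul_defect_cap (v : 'rV[R]_N) j : (0 < m)%N -> (j < 4 * m)%N ->
  rv_nth (v *m C) j =
  (rv_nth v j - rv_nth v j.-1) / sp j + (rv_nth v j - rv_nth v j.+1) / sp j.+1.
Proof.
move=> m_gt0 j_lt; have j_ltN : (j < N)%N by lia.
have -> : rv_nth (v *m C) j = \sum_(0 <= k < N) rv_nth v k * defect_entry s1 s2 m k.+1 j.+1.
  rewrite -[j]/(nat_of_ord (Ordinal j_ltN)) rv_nth_ord mxE big_mkord.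
  by apply: eq_bigr => k _; rewrite rv_nth_ord mxE.
rewrite (@big_nat_band _ _ j); [|lia|]; last first.
  by move=> k far; rewrite defect_entry_far ?mulr0 //; apply/eqP; lia.
case: j j_lt {j_ltN} => [|j] j_lt /=.
  rewrite big_ltn // big_nat1 subrr mul0r add0r defect_entry_first // defect_entry_sym.
  by rewrite defect_entry_super; ring.
rewrite big_ltn; last lia.
rewrite big_ltn; last lia.
rewrite big_nat1 defect_entry_diag; last lia.
by rewrite [defect_entry _ _ _ j.+3 _]defect_entry_sym !defect_entry_super; ring.
Qed.

End DefectCap.

Definition transfer_vec (U : comUnitRingType) (al t : U) m : 'rV[U]_(4 * m + 1) :=
  \row_k transfer_seq al t (minn k (4 * m - k)).

Lemma rv_nth_transfer_vec (U : comUnitRingType) (al t : U) m k : (k <= 2 * m)%N ->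
  rv_nth (transfer_vec al t m) k = transfer_seq al t k.
Proof.
move=> k_le; have k_lt : (k < 4 * m + 1)%N by lia.
by rewrite -[k]/(nat_of_ord (Ordinal k_lt)) rv_nth_ord mxE /=; congr transfer_seq; lia.
Qed.

Lemma rv_rev_transfer_vec (U : comUnitRingType) (al t : U) m :
  rv_rev (transfer_vec al t m) = transfer_vec al t m.
Proof. by apply/rowP => k; rewrite !mxE /=; congr transfer_seq; have := ltn_ord k; lia. Qed.

Lemma transfer_vec_neq0 (U : comUnitRingType) (al t : U) m : transfer_vec al t m != 0.
Proof.
have first_lt : (0 < 4 * m + 1)%N by rewrite addn1.
apply/eqP => /rowP/(_ (Ordinal first_lt)); rewrite !mxE /= min0n transfer_seq0.
by move/eqP; rewrite oner_eq0.
Qed.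

Lemma transfer_vec_dot_gt0 (R : realFieldType) (a b t : R) m :
  1 < t -> 2 < t * a -> a < 2 -> 2 < t * b -> b < 2 ->
  0 < (transfer_vec a t m *m (transfer_vec b t m)^T) 0 0.
Proof.
move=> t_gt1 ta_gt2 a_lt2 tb_gt2 b_lt2.
pose F k := transfer_seq a t k * transfer_seq b t k.
have -> : (transfer_vec a t m *m (transfer_vec b t m)^T) 0 0 =
    \sum_(0 <= k < (2 * (2 * m)).+1) F (minn k (2 * (2 * m) - k)).
  rewrite mxE big_mkord (_ : (2 * (2 * m)).+1 = 4 * m + 1)%N; last lia.
  by apply: eq_bigr => k _; rewrite !mxE mulnA.
rewrite big_nat_mirror big_nat_pairs /F !transfer_seq_double.
have [mid_gt0 _] := transfer_dot_gt0 m t_gt1 ta_gt2 a_lt2 tb_gt2 b_lt2.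
apply: ltr_wpDl mid_gt0; rewrite mulrn_wge0 // sumr_ge0 // => i _.
have [_ pair_gt0] := transfer_dot_gt0 i t_gt1 ta_gt2 a_lt2 tb_gt2 b_lt2.
by rewrite !transfer_seq_double !transfer_seq_double_succ ltW.
Qed.

Section DefectEigen.
Variables (R : realType) (s1 s2 : R) (m : nat).
Local Notation N := (4 * m + 1)%N.
Local Notation C := (defect_cap s1 s2 m).
Local Notation sp := (spacing s1 s2 m).
Local Notation ratio := (s2 / s1).

Lemma transfer_step_spacing l k a b : 0 < s1 -> 0 < s2 -> (k < 2 * m)%N ->
  transfer_step (l * s1) ratio k a b = b - sp k.+1 * (l * b - (b - a) / sp k).
Proof.
move=> s1_gt0 s2_gt0 k_lt; rewrite /transfer_step /spacing k_lt (ltnW k_lt) oddS.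
by case: odd => /=; field; rewrite ?gt_eqF.
Qed.

Lemma mul_defect_cap_residual l (v : 'rV[R]_N) k : 0 < s1 -> 0 < s2 -> (k < 2 * m)%N ->
  rv_nth (v *m C) k - l * rv_nth v k =
  (transfer_step (l * s1) ratio k (rv_nth v k.-1) (rv_nth v k) - rv_nth v k.+1) / sp k.+1.
Proof.
move=> s1_gt0 s2_gt0 k_lt; rewrite rv_nth_mul_defect_cap ?transfer_step_spacing //; try lia.
by field; apply/andP; split; rewrite gt_eqF ?spacing_gt0.
Qed.

Lemma eigenvector_transfer_seq l (v : 'rV[R]_N) : 0 < s1 -> 0 < s2 -> v *m C = l *: v ->
  forall k, (k <= 2 * m)%N -> rv_nth v k = rv_nth v 0 * transfer_seq (l * s1) ratio k.
Proof.
move=> s1_gt0 s2_gt0 eig_v.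
suff two_steps k : (k <= 2 * m)%N ->
    rv_nth v k.-1 = rv_nth v 0 * transfer_seq (l * s1) ratio k.-1 /\
    rv_nth v k = rv_nth v 0 * transfer_seq (l * s1) ratio k.
  by move=> k /two_steps[].
elim: k => [|k IH] k_lt; first by rewrite transfer_seq0 mulr1.
have [IH1 IH2] := IH (ltnW k_lt); split => //.
have := mul_defect_cap_residual l v s1_gt0 s2_gt0 k_lt.
have sp_neq0 : sp k.+1 != 0 by rewrite gt_eqF ?spacing_gt0.
rewrite eig_v rv_nthZ subrr => /esym/eqP; rewrite mulf_eq0 invr_eq0 (negbTE sp_neq0) orbF.
by rewrite subr_eq0 => /eqP <-; rewrite IH1 IH2 transfer_stepZ transfer_seqS.
Qed.

Lemma transfer_vec_eigen al : 0 < s1 -> 0 < s2 -> (0 < m)%N -> center_residual al ratio m = 0 ->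
  transfer_vec al ratio m *m C = (al / s1) *: transfer_vec al ratio m.
Proof.
move=> s1_gt0 s2_gt0 m_gt0 root_al.
have left_half k : (k <= 2 * m)%N ->
    rv_nth (transfer_vec al ratio m *m C) k = al / s1 * rv_nth (transfer_vec al ratio m) k.
  rewrite leq_eqVlt => /orP[/eqP-> | k_lt]; last first.
    have s1_neq0 : s1 != 0 by rewrite gt_eqF.
    apply/eqP; rewrite -subr_eq0 mul_defect_cap_residual // divfK //.
    by rewrite !rv_nth_transfer_vec -?transfer_seqS ?subrr ?mul0r //; lia.
  rewrite rv_nth_mul_defect_cap //; last lia.
  (* by symmetry, w_(2m+1) = w_(2m-1) *)
  rewrite -[X in rv_nth X (2 * m).+1]rv_rev_transfer_vec rv_nth_rev; last lia.
  rewrite (_ : ((4 * m + 1).-1 - (2 * m).+1 = (2 * m).-1)%N); last lia.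
  rewrite !rv_nth_transfer_vec ?leq_pred // /spacing leqnn ltnn /= oddM /=.
  move: root_al => /eqP; rewrite subr_eq0 => /eqP root_al.
  rewrite -mulrDl -mulr2n -mulr_natl root_al.
  by field; rewrite !gt_eqF.
apply: rv_nthP => k k_lt; rewrite rv_nthZ.
case: (leqP k (2 * m)) => [|k_gt]; first exact: left_half.
rewrite -[transfer_vec _ _ _ in LHS]rv_rev_transfer_vec mulmx_rev_defect_cap rv_nth_rev //.
rewrite left_half; last lia.
by rewrite -[X in _ = _ * rv_nth X _]rv_rev_transfer_vec rv_nth_rev.
Qed.

Lemma gap_scaled l : 0 < s1 -> s1 < s2 -> 2 / s2 < l < 2 / s1 ->
  [/\ 1 < ratio, 2 < ratio * (l * s1) & l * s1 < 2].
Proof.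
move=> s1_gt0 s12 /andP[l_gt l_lt]; have s2_gt0 : 0 < s2 by lra.
rewrite ltr_pdivlMr // mul1r (_ : ratio * (l * s1) = l * s2); last by field; rewrite gt_eqF.
by split => //; [move: l_gt | move: l_lt]; rewrite ?ltr_pdivrMr ?ltr_pdivlMr.
Qed.

Lemma gap_unscaled al : 0 < s1 -> 0 < s2 -> 2 / ratio < al < 2 -> 2 / s2 < al / s1 < 2 / s1.
Proof.
move=> s1_gt0 s2_gt0 /andP[lo hi].
rewrite ltr_pdivlMr // ltr_pdivrMr // divfK ?gt_eqF // hi andbT.
by rewrite (_ : 2 / s2 * s1 = 2 / ratio) //; field; rewrite !gt_eqF.
Qed.

Lemma eigenvector_gap l (v : 'rV[R]_N) : 0 < s1 -> s1 < s2 -> (0 < m)%N ->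
  2 / s2 < l < 2 / s1 -> v *m C = l *: v -> v = rv_nth v 0 *: transfer_vec (l * s1) ratio m.
Proof.
move=> s1_gt0 s12 m_gt0 l_gap eig_v; have s2_gt0 : 0 < s2 by lra.
have [t_gt1 tal_gt2 al_lt2] := gap_scaled s1_gt0 s12 l_gap.
have eig_rv : rv_rev v *m C = l *: rv_rev v by rewrite mulmx_rev_defect_cap eig_v rv_revZ.
have v_X := eigenvector_transfer_seq s1_gt0 s2_gt0 eig_v.
have rv_X := eigenvector_transfer_seq s1_gt0 s2_gt0 eig_rv.
have Xmid_neq0 : transfer_seq (l * s1) ratio (2 * m) != 0.
  rewrite transfer_seq_double; apply: contraTneq (transfer_cone m t_gt1 tal_gt2 al_lt2) => ->.
  by rewrite mulr0 ltNge normr_ge0.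
have rev_first : rv_nth (rv_rev v) 0 = rv_nth v 0.
  have := rv_X (2 * m)%N (leqnn _); rewrite rv_nth_rev; last lia.
  rewrite (_ : (N.-1 - 2 * m = 2 * m)%N); last lia.
  by rewrite v_X // => /mulIf ->.
apply: rv_nthP => k k_lt; rewrite rv_nthZ.
case: (leqP k (2 * m)) => [k_le|k_gt]; first by rewrite rv_nth_transfer_vec // v_X.
rewrite -[X in _ = _ * rv_nth X _]rv_rev_transfer_vec rv_nth_rev // rv_nth_transfer_vec; last lia.
by rewrite (rv_nth_rev_sub v k_lt) rv_X ?rev_first //; lia.
Qed.

Lemma defect_cap_gap_eigenvalue_unique a b : 0 < s1 -> s1 < s2 -> (0 < m)%N ->
  2 / s2 < a < 2 / s1 -> eigenvalue C a -> 2 / s2 < b < 2 / s1 -> eigenvalue C b -> a = b.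
Proof.
move=> s1_gt0 s12 m_gt0 a_gap /eigenvalueP[u eig_u u_neq0] b_gap /eigenvalueP[v eig_v v_neq0].
apply/eqP; apply: contraT => neq_ab.
have [ta_gt1 ta_gt2 a_lt2] := gap_scaled s1_gt0 s12 a_gap.
have [_ tb_gt2 b_lt2] := gap_scaled s1_gt0 s12 b_gap.
have u_eq := eigenvector_gap s1_gt0 s12 m_gt0 a_gap eig_u.
have v_eq := eigenvector_gap s1_gt0 s12 m_gt0 b_gap eig_v.
have u0_neq0 : rv_nth u 0 != 0 by apply: contraNneq u_neq0 => u0; rewrite u_eq u0 scale0r.
have v0_neq0 : rv_nth v 0 != 0 by apply: contraNneq v_neq0 => v0; rewrite v_eq v0 scale0r.
have := eigenvectors_orthogonal (defect_cap_tr s1 s2 m) eig_u eig_v neq_ab.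
rewrite u_eq v_eq linearZ /= -scalemxAr -scalemxAl => /matrixP/(_ 0 0).
rewrite 2!mxE [RHS]mxE => /eqP; rewrite !mulf_eq0 (negbTE u0_neq0) (negbTE v0_neq0) /=.
by rewrite gt_eqF // transfer_vec_dot_gt0.
Qed.

End DefectEigen.

Theorem mainTheorem7 (R : realType) (s1 s2 : R) :
  0 < s1 -> s1 < s2 ->
  (forall m : nat, (1 <= m)%N ->
     forall a b : R,
       2 / s2 < a < 2 / s1 -> eigenvalue (defect_cap s1 s2 m) a ->
       2 / s2 < b < 2 / s1 -> eigenvalue (defect_cap s1 s2 m) b ->
       a = b) /\
  (exists M : nat, forall m : nat, (M <= m)%N -> (1 <= m)%N ->
     exists a : R,
       (2 / s2 < a < 2 / s1 /\ eigenvalue (defect_cap s1 s2 m) a) /\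
       (forall b : R, 2 / s2 < b < 2 / s1 ->
          eigenvalue (defect_cap s1 s2 m) b -> b = a)).
Proof.
move=> s1_gt0 s12; have s2_gt0 : 0 < s2 by lra.
split=> [m m_gt0 a b|]; first exact: defect_cap_gap_eigenvalue_unique.
have ratio_gt1 : 1 < s2 / s1 by rewrite ltr_pdivlMr // mul1r.
have [M root_M] := center_residual_root ratio_gt1.
exists M => m le_Mm m_gt0; have [al al_gap root_al] := root_M m le_Mm.
have a_gap := gap_unscaled s1_gt0 s2_gt0 al_gap.
have eig_a : eigenvalue (defect_cap s1 s2 m) (al / s1).
  apply/eigenvalueP; exists (transfer_vec al (s2 / s1) m); last exact: transfer_vec_neq0.
  exact: transfer_vec_eigen.
exists (al / s1); split=> // b b_gap eig_b.
exact: defect_cap_gap_eigenvalue_unique s1_gt0 s12 m_gt0 b_gap eig_b a_gap eig_a.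
Qed.
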